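(* Assume the vector variational inequality defined by $F$ and $K$ is monotone. (a) If $\mathcal{A}$ is a bounded connected component of $\mathrm{Sol}^w(F,K)$, then $S^{-1}(\mathcal{A})=\{\xi\in\Delta:S(\xi)\cap\mathcal{A}\neq\emptyset\}$ is open in the induced topology of $\Delta$. (b) If $\mathcal{A}$ is a bounded connected component of $\mathrm{Sol}^{pr}(F,K)$, then $\{\xi\in\operatorname{ri}\Delta:S(\xi)\cap\mathcal{A}\neq\emptyset\}$ is open in the induced topology of $\operatorname{ri}\Delta$.
   Context: Let $K\subset\mathbb{R}^n$ be a nonempty closed convex set and $F_1,\dots,F_m:K\to\mathbb{R}^n$ continuous functions; write $F=(F_1,\dots,F_m)$ and $F(x)(u)=(\langle F_1(x),u\rangle,\dots,\langle F_m(x),u\rangle)$. The problem is monotone if each $F_l$ is monotone on $K$: $\langle F_l(y)-F_l(x),y-x\rangle\ge0$ for all $x,y\in K$. Let $\Delta=\{\xi\in\mathbb{R}^m_+ : \sum_l\xi_l=1\}$, $\operatorname{ri}\Delta=\{\xi\in\Delta:\xi_l>0,\ l=1,\dots,m\}$, and $F_\xi=\sum_l\xi_lF_l$. For $G:K\to\mathbb{R}^n$, $\mathrm{Sol}(G,K)=\{x\in K:\langle G(x),y-x\rangle\ge0\ \forall y\in K\}$. The weak Pareto solution set $\mathrm{Sol}^w(F,K)$ is the set of $x\in K$ with $F(x)(x-y)\notin\operatorname{int}\mathbb{R}^m_+$ for all $y\in K$; it is known that $\mathrm{Sol}^w(F,K)=\bigcup_{\xi\in\Delta}\mathrm{Sol}(F_\xi,K)$.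 The proper Pareto solution set is $\mathrm{Sol}^{pr}(F,K)=\bigcup_{\xi\in\operatorname{ri}\Delta}\mathrm{Sol}(F_\xi,K)$. The basic multifunction is $S(\xi)=\mathrm{Sol}(F_\xi,K)$ for $\xi\in\Delta$. *)

From Stdlib Require Import Reals.
From Stdlib Require Fin.
Open Scope R_scope.

Definition vec (n : nat) : Type := Fin.t n -> R.

Fixpoint fsum (n : nat) : (Fin.t n -> R) -> R :=
  match n return (Fin.t n -> R) -> R with
  | O => fun _ => 0
  | S k => fun f => f Fin.F1 + fsum k (fun i => f (Fin.FS i))
  end.

Definition dot {n : nat} (x y : vec n) : R := fsum n (fun i => x i * y i).
Definition vsub {n : nat} (x y : vec n) : vec n := fun i => x i - y i.
Definition vnorm {n : nat} (x : vec n) : R := sqrt (dot x x).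
Definition vdist {n : nat} (x y : vec n) : R := vnorm (vsub x y).

Definition vopen {n : nat} (U : vec n -> Prop) : Prop :=
  forall x, U x -> exists eps, 0 < eps /\ forall y, vdist x y < eps -> U y.
Definition vclosed {n : nat} (C : vec n -> Prop) : Prop :=
  vopen (fun x => ~ C x).
Definition vconvex {n : nat} (K : vec n -> Prop) : Prop :=
  forall x y t, K x -> K y -> 0 <= t <= 1 -> K (fun i => t * x i + (1 - t) * y i).
Definition vbounded {n : nat} (A : vec n -> Prop) : Prop :=
  exists r, forall x, A x -> vnorm x <= r.

Definition vconnected {n : nat} (C : vec n -> Prop) : Prop :=
  ~ exists U V : vec n -> Prop,
      vopen U /\ vopen V /\
      (forall x, C x -> U x \/ V x) /\
      (exists x, C x /\ U x) /\ (exists x, C x /\ V x) /\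
      (forall x, C x -> U x -> V x -> False).

Definition conn_component {n : nat} (S C : vec n -> Prop) : Prop :=
  (exists x, C x) /\ (forall x, C x -> S x) /\ vconnected C /\
  (forall D : vec n -> Prop, vconnected D -> (forall x, C x -> D x) ->
     (forall x, D x -> S x) -> forall x, D x -> C x).

Definition vcontinuous_on {n : nat} (K : vec n -> Prop) (G : vec n -> vec n) : Prop :=
  forall x, K x -> forall eps, 0 < eps -> exists delta, 0 < delta /\
    forall y, K y -> vdist x y < delta -> vdist (G x) (G y) < eps.
Definition monotone_on {n : nat} (K : vec n -> Prop) (G : vec n -> vec n) : Prop :=
  forall x y, K x -> K y -> 0 <= dot (vsub (G y) (G x)) (vsub y x).

Definition Sol {n : nat} (G : vec n -> vec n) (K : vec n -> Prop) (x : vec n) : Prop :=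
  K x /\ forall y, K y -> 0 <= dot (G x) (vsub y x).

Definition simplex {m : nat} (xi : vec m) : Prop :=
  (forall l, 0 <= xi l) /\ fsum m xi = 1.
Definition ri_simplex {m : nat} (xi : vec m) : Prop :=
  (forall l, 0 < xi l) /\ fsum m xi = 1.

Definition Fcomb {m n : nat} (F : Fin.t m -> vec n -> vec n) (xi : vec m) : vec n -> vec n :=
  fun x i => fsum m (fun l => xi l * F l x i).

Definition SolW {m n : nat} (F : Fin.t m -> vec n -> vec n) (K : vec n -> Prop) (x : vec n) : Prop :=
  K x /\ forall y, K y -> ~ (forall l, 0 < dot (F l x) (vsub x y)).

(* proper Pareto solutions: union over ri Delta of Sol(F_xi,K) *)
Definition SolPr {m n : nat} (F : Fin.t m -> vec n -> vec n) (K : vec n -> Prop) (x : vec n) : Prop :=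
  exists xi, ri_simplex xi /\ Sol (Fcomb F xi) K x.

Definition rel_open {m : nat} (D T : vec m -> Prop) : Prop :=
  (forall xi, T xi -> D xi) /\
  forall xi, T xi -> exists eps, 0 < eps /\ forall eta, D eta -> vdist xi eta < eps -> T eta.

From Stdlib Require Import Reals.
From Stdlib Require Fin.
From Stdlib Require Import Lra Lia Psatz List Classical ClassicalEpsilon FunctionalExtensionality.
Open Scope R_scope.

(* Fix xi0 in the parameter set and x0 in S(xi0) /\ A.  S(xi0) is convex (Minty), hence
   connected, so it lies in the component A and thus in a ball of radius r.  For the problem
   truncated to the ball of radius r + 1 no solution at xi0 reaches the boundary sphere, and by
   compactness and the closed graph of the truncated solution map the same holds for all xi
   near xi0; such solutions solve the untruncated problem.  Along segments of parameters the
   truncated solution sets form an upper semicontinuous family of nonempty convex sets, so their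
   union D over a small convex neighbourhood of xi0 is connected; D meets A at x0, hence D is
   contained in A, and every nearby xi has a solution in A.
   Existence for the truncated problems avoids Brouwer's theorem: minimising the penalty
   sum_i min(0, <G y_i, y_i - x>)^2 over the compact convex set yields, by monotonicity, a point
   satisfying the Minty inequalities at finitely many points y_i; taking finer and finer nets
   and a convergent subsequence gives a Minty solution, which is a solution. *)

(** * Finite sums and the Euclidean norm *)

Lemma fsum_ext n (f g : Fin.t n -> R) : (forall i, f i = g i) -> fsum n f = fsum n g.
Proof.
  revert f g; induction n as [|n IH]; simpl; intros f g H; [reflexivity|].
  rewrite H, (IH _ (fun i => g (Fin.FS i))); auto.
Qed.

Lemma fsum_plus n (f g : Fin.t n -> R) :
  fsum n (fun i => f i + g i) = fsum n f + fsum n g.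
Proof. revert f g; induction n as [|n IH]; simpl; intros; [lra|]. rewrite IH; lra. Qed.

Lemma fsum_scal n c (f : Fin.t n -> R) : fsum n (fun i => c * f i) = c * fsum n f.
Proof. revert f; induction n as [|n IH]; simpl; intros; [lra|]. rewrite IH; lra. Qed.

Lemma fsum_scal_r n c (f : Fin.t n -> R) : fsum n (fun i => f i * c) = fsum n f * c.
Proof. rewrite Rmult_comm, <- fsum_scal. apply fsum_ext; intros; ring. Qed.

Lemma fsum_minus n (f g : Fin.t n -> R) :
  fsum n (fun i => f i - g i) = fsum n f - fsum n g.
Proof. revert f g; induction n as [|n IH]; simpl; intros; [lra|]. rewrite IH; lra. Qed.

Lemma fsum_opp n (f : Fin.t n -> R) : fsum n (fun i => - f i) = - fsum n f.
Proof. revert f; induction n as [|n IH]; simpl; intros; [lra|]. rewrite IH; lra. Qed.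

Lemma fsum_zero n : fsum n (fun _ => 0) = 0.
Proof. induction n as [|n IH]; simpl; [|rewrite IH]; lra. Qed.

Lemma fsum_le n (f g : Fin.t n -> R) : (forall i, f i <= g i) -> fsum n f <= fsum n g.
Proof.
  revert f g; induction n as [|n IH]; simpl; intros f g H; [lra|].
  pose proof (IH (fun i => f (Fin.FS i)) (fun i => g (Fin.FS i)) (fun i => H _)).
  specialize (H Fin.F1). lra.
Qed.

Lemma fsum_nonneg n (f : Fin.t n -> R) : (forall i, 0 <= f i) -> 0 <= fsum n f.
Proof. intros H. rewrite <- (fsum_zero n). apply fsum_le; auto. Qed.

Lemma fsum_ge_term n (f : Fin.t n -> R) j : (forall i, 0 <= f i) -> f j <= fsum n f.
Proof.
  revert f j; induction n as [|n IH]; intros f j H; [inversion j|].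
  apply (Fin.caseS' j); simpl.
  - pose proof (fsum_nonneg n (fun i => f (Fin.FS i)) (fun i => H _)). lra.
  - intro p. pose proof (IH (fun i => f (Fin.FS i)) p (fun i => H _)).
    pose proof (H Fin.F1). lra.
Qed.

Lemma fsum_le_const n (f : Fin.t n -> R) c : (forall i, f i <= c) -> fsum n f <= INR n * c.
Proof.
  revert f; induction n as [|n IH]; intros f H; simpl; [lra|].
  pose proof (IH (fun i => f (Fin.FS i)) (fun i => H _)). pose proof (H Fin.F1).
  change (f Fin.F1 + fsum n (fun i => f (Fin.FS i)) <= INR (S n) * c).
  rewrite S_INR. lra.
Qed.

Lemma fsum_exchange m n (f : Fin.t m -> Fin.t n -> R) :
  fsum m (fun i => fsum n (fun j => f i j)) = fsum n (fun j => fsum m (fun i => f i j)).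
Proof.
  revert n f; induction m as [|m IH]; simpl; intros n f.
  - symmetry. apply fsum_zero.
  - rewrite IH, <- fsum_plus. reflexivity.
Qed.

Lemma dot_ext n (x x' y y' : vec n) :
  (forall i, x i = x' i) -> (forall i, y i = y' i) -> dot x y = dot x' y'.
Proof. intros Hx Hy. apply fsum_ext; intros i. rewrite Hx, Hy; reflexivity. Qed.

Lemma dot_nonneg n (x : vec n) : 0 <= dot x x.
Proof. apply fsum_nonneg; intros; nra. Qed.

Lemma dot_vsub_sub n (g a b x : vec n) :
  dot g (vsub a x) - dot g (vsub b x) = dot g (vsub a b).
Proof. unfold dot, vsub. rewrite <- fsum_minus. apply fsum_ext; intros; ring. Qed.

Lemma dot_vsub_swap n (g a b : vec n) : dot g (vsub a b) = - dot g (vsub b a).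
Proof.
  unfold dot, vsub. rewrite <- fsum_opp. apply fsum_ext; intros; ring.
Qed.

Lemma dot_vsub_vsub n (g h a b : vec n) :
  dot (vsub g h) (vsub a b) = dot g (vsub a b) + dot h (vsub b a).
Proof. unfold dot, vsub. rewrite <- fsum_plus. apply fsum_ext; intros; ring. Qed.

Lemma dot_vsub_convex n (g x y : vec n) t :
  dot g (vsub (fun i => t * y i + (1 - t) * x i) x) = t * dot g (vsub y x).
Proof. unfold dot, vsub. rewrite <- fsum_scal. apply fsum_ext; intros; ring. Qed.

Lemma cauchy_schwarz n (x y : vec n) : dot x y * dot x y <= dot x x * dot y y.
Proof.
  set (a := dot x x); set (b := dot x y); set (c := dot y y).
  assert (Hq : forall t, 0 <= a + 2 * t * b + t * t * c).
  { intros t. pose proof (dot_nonneg n (fun i => x i + t * y i)) as H.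
    replace (a + 2 * t * b + t * t * c)
      with (dot (fun i => x i + t * y i) (fun i => x i + t * y i)); [exact H|].
    unfold a, b, c, dot. rewrite <- !fsum_scal, <- !fsum_plus. apply fsum_ext; intros; ring. }
  assert (Ha : 0 <= a) by apply dot_nonneg.
  assert (Hc : 0 <= c) by apply dot_nonneg.
  destruct (Req_dec c 0) as [Hc0|Hc0].
  - destruct (Req_dec b 0) as [Hb|Hb]; [rewrite Hb; nra|].
    specialize (Hq (- (a + 1) / (2 * b))). rewrite Hc0 in Hq.
    replace (a + 2 * (- (a + 1) / (2 * b)) * b + - (a + 1) / (2 * b) * (- (a + 1) / (2 * b)) * 0)
      with (-1) in Hq by (field; auto). lra.
  - specialize (Hq (- b / c)).
    assert (Hm : 0 <= (a + 2 * (- b / c) * b + - b / c * (- b / c) * c) * c) by nra.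
    replace ((a + 2 * (- b / c) * b + - b / c * (- b / c) * c) * c)
      with (a * c - b * b) in Hm by (field; auto). lra.
Qed.

Lemma vnorm_nonneg n (x : vec n) : 0 <= vnorm x.
Proof. apply sqrt_pos. Qed.

Lemma vnorm_sq n (x : vec n) : vnorm x * vnorm x = dot x x.
Proof. apply sqrt_sqrt, dot_nonneg. Qed.

Lemma vnorm_le n (x : vec n) e : 0 <= e -> dot x x <= e * e -> vnorm x <= e.
Proof.
  intros. unfold vnorm. rewrite <- (sqrt_square e) by lra.
  apply sqrt_le_1; [apply dot_nonneg|nra|lra].
Qed.

Lemma vnorm_ext n (x y : vec n) : (forall i, x i = y i) -> vnorm x = vnorm y.
Proof. intros H. unfold vnorm. f_equal. apply dot_ext; auto. Qed.

Lemma coord_le_vnorm n (x : vec n) i : Rabs (x i) <= vnorm x.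
Proof.
  assert (Rabs (x i) * Rabs (x i) <= vnorm x * vnorm x).
  { rewrite <- Rabs_mult, vnorm_sq, Rabs_pos_eq by nra.
    apply (fsum_ge_term n (fun i => x i * x i)); intros; nra. }
  pose proof (vnorm_nonneg n x). pose proof (Rabs_pos (x i)). nra.
Qed.

Lemma vnorm_scal n c (x : vec n) : vnorm (fun i => c * x i) = Rabs c * vnorm x.
Proof.
  unfold vnorm. rewrite <- (sqrt_square (Rabs c)) by apply Rabs_pos.
  rewrite <- sqrt_mult; [f_equal | pose proof (Rabs_pos c); nra | apply dot_nonneg]. unfold dot. rewrite <- fsum_scal. apply fsum_ext; intros.
  rewrite <- Rabs_mult, Rabs_pos_eq by nra. ring.
Qed.

Lemma vnorm_triangle n (x y : vec n) : vnorm (fun i => x i + y i) <= vnorm x + vnorm y.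
Proof.
  pose proof (vnorm_nonneg n x); pose proof (vnorm_nonneg n y).
  apply vnorm_le; [lra|].
  replace (dot (fun i => x i + y i) (fun i => x i + y i)) with (dot x x + 2 * dot x y + dot y y)
    by (unfold dot; rewrite <- fsum_scal, <- !fsum_plus; apply fsum_ext; intros; ring).
  pose proof (cauchy_schwarz n x y).
  rewrite <- (vnorm_sq n x), <- (vnorm_sq n y) in *.
  assert (dot x y <= vnorm x * vnorm y).
  { destruct (Rle_or_lt (dot x y) (vnorm x * vnorm y)) as [|Hlt]; [assumption|].
    assert (0 <= vnorm x * vnorm y) by nra. nra. }
  nra.
Qed.

Lemma vnorm_convex n (x y : vec n) t : 0 <= t <= 1 ->
  vnorm (fun i => t * x i + (1 - t) * y i) <= t * vnorm x + (1 - t) * vnorm y.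
Proof.
  intros Ht. eapply Rle_trans; [apply (vnorm_triangle n (fun i => t * x i) (fun i => (1 - t) * y i))|].
  rewrite !vnorm_scal, !Rabs_pos_eq by lra. lra.
Qed.

Lemma vnorm_le_vdist n (x y : vec n) : vnorm x <= vnorm y + vdist x y.
Proof.
  unfold vdist. rewrite (vnorm_ext n x (fun i => y i + vsub x y i)) by (intros; unfold vsub; ring).
  apply vnorm_triangle.
Qed.

Lemma vdist_sym n (x y : vec n) : vdist x y = vdist y x.
Proof. unfold vdist, vnorm. f_equal. apply fsum_ext; intros; unfold vsub; ring. Qed.

Lemma vdist_eq0 n (x y : vec n) : (forall i, x i = y i) -> vdist x y = 0.
Proof.
  intros H. unfold vdist, vnorm, dot, vsub.
  rewrite (fsum_ext n _ (fun _ => 0)), fsum_zero by (intros; rewrite H; ring). apply sqrt_0.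
Qed.

Lemma vdist_convex_comb n (a b : vec n) s s' :
  vdist (fun i => s * b i + (1 - s) * a i) (fun i => s' * b i + (1 - s') * a i)
  = Rabs (s - s') * vdist b a.
Proof. unfold vdist. rewrite <- vnorm_scal. apply vnorm_ext; intros; unfold vsub; ring. Qed.

Lemma vdist_lt_of_coords n e : 0 < e -> exists eta, 0 < eta /\
  forall x y : vec n, (forall i, Rabs (x i - y i) < eta) -> vdist x y < e.
Proof.
  intros He. pose proof (pos_INR n) as Hn.
  set (c := e / (INR n + 1)).
  assert (Hc : 0 < c) by (apply Rdiv_lt_0_compat; lra).
  assert (Hce : c * (INR n + 1) = e) by (unfold c; field; lra).
  exists c. split; [exact Hc|]. intros x y H.
  assert (dot (vsub x y) (vsub x y) <= INR n * (c * c)).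
  { apply fsum_le_const. intros i. specialize (H i).
    pose proof (Rabs_pos (x i - y i)). pose proof (Rle_abs ((x i - y i) * (x i - y i))).
    rewrite Rabs_mult in *. unfold vsub. nra. }
  assert (dot (vsub x y) (vsub x y) < e * e) by nra.
  unfold vdist, vnorm. rewrite <- (sqrt_square e) by lra.
  apply sqrt_lt_1; [apply dot_nonneg|nra|lra].
Qed.

Lemma vdist_triangle n (x y z : vec n) : vdist x z <= vdist x y + vdist y z.
Proof.
  unfold vdist. rewrite (vnorm_ext n (vsub x z) (fun i => vsub x y i + vsub y z i))
    by (intros; unfold vsub; ring).
  apply vnorm_triangle.
Qed.

(** * Sequences and sequential compactness *)

Lemma inv_INR_S_pos k : 0 < / INR (S k).
Proof. apply Rinv_0_lt_compat, lt_0_INR; lia. Qed.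

Lemma inv_INR_S_small eps : 0 < eps -> exists N, forall k, (k >= N)%nat -> / INR (S k) < eps.
Proof.
  intros He. destruct (INR_archimed eps 1 He) as [N HN]. exists N. intros k Hk.
  assert (INR N <= INR k) by (apply le_INR; lia). rewrite S_INR.
  assert (0 < INR k + 1) by (pose proof (pos_INR k); lra).
  apply Rmult_lt_reg_r with (INR k + 1); auto. rewrite Rinv_l by lra. nra.
Qed.

Lemma cv_inv_INR_S : Un_cv (fun k => / INR (S k)) 0.
Proof.
  intros e He. destruct (inv_INR_S_small e He) as [N HN]. exists N. intros k Hk.
  unfold R_dist. rewrite Rminus_0_r, Rabs_pos_eq by (left; apply inv_INR_S_pos). auto.
Qed.

Lemma cv_const c : Un_cv (fun _ => c) c.
Proof. intros e He; exists O; intros; unfold R_dist; rewrite Rminus_diag, Rabs_R0; lra. Qed.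

Lemma cv_le (u : nat -> R) l c : Un_cv u l -> (forall k, u k <= c) -> l <= c.
Proof.
  intros H Hc. destruct (Rle_or_lt l c); auto. destruct (H (l - c)) as [N HN]; [lra|].
  specialize (HN N (le_n _)). specialize (Hc N). unfold R_dist in HN.
  pose proof (Rle_abs (l - u N)). rewrite Rabs_minus_sym in HN. lra.
Qed.

Lemma cv_ge (u : nat -> R) l c : Un_cv u l -> (forall k, c <= u k) -> c <= l.
Proof.
  intros H Hc. enough (- l <= - c) by lra.
  apply (cv_le (fun k => - u k)); [apply CV_opp; auto|]. intros k; specialize (Hc k); lra.
Qed.

Definition vcv {n} (u : nat -> vec n) (x : vec n) : Prop :=
  forall i, Un_cv (fun k => u k i) (x i).

Lemma vcv_const n (x : vec n) : vcv (fun _ => x) x.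
Proof. intros i; apply cv_const. Qed.

Lemma vcv_sub n (u v : nat -> vec n) x y :
  vcv u x -> vcv v y -> vcv (fun k => vsub (u k) (v k)) (vsub x y).
Proof. intros H1 H2 i. apply CV_minus; auto. Qed.

Lemma vcv_convex_comb n (s : nat -> R) s0 (a b : vec n) : Un_cv s s0 ->
  vcv (fun k i => s k * b i + (1 - s k) * a i) (fun i => s0 * b i + (1 - s0) * a i).
Proof.
  intros Hs i. apply CV_plus; apply CV_mult; auto using cv_const.
  apply CV_minus; auto using cv_const.
Qed.

Lemma fsum_cv n (f : nat -> Fin.t n -> R) g : (forall i, Un_cv (fun k => f k i) (g i)) ->
  Un_cv (fun k => fsum n (f k)) (fsum n g).
Proof.
  revert f g; induction n as [|n IH]; simpl; intros f g H; [apply cv_const|].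
  apply CV_plus; [apply H|]. apply (IH (fun k i => f k (Fin.FS i))). intros; apply H.
Qed.

Lemma dot_cv n (u v : nat -> vec n) x y :
  vcv u x -> vcv v y -> Un_cv (fun k => dot (u k) (v k)) (dot x y).
Proof.
  intros H1 H2. apply (fsum_cv n (fun k i => u k i * v k i)). intros; apply CV_mult; auto.
Qed.

Lemma fin_eventually n (P : Fin.t n -> nat -> Prop) :
  (forall i, exists N, forall k, (k >= N)%nat -> P i k) ->
  exists N, forall k, (k >= N)%nat -> forall i, P i k.
Proof.
  revert P; induction n as [|n IH]; intros P H.
  - exists O. intros k _ i. inversion i.
  - destruct (IH (fun i k => P (Fin.FS i) k)) as [N1 H1]; [intros i; apply H|].
    destruct (H Fin.F1) as [N2 H2]. exists (max N1 N2). intros k Hk i.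
    apply (Fin.caseS' i); [apply H2; lia|]. intro p. apply H1; lia.
Qed.

Lemma vcv_vdist n (u : nat -> vec n) x : vcv u x ->
  forall e, 0 < e -> exists N, forall k, (k >= N)%nat -> vdist x (u k) < e.
Proof.
  intros H e He. destruct (vdist_lt_of_coords n e He) as [eta [Heta Hs]].
  destruct (fin_eventually n (fun i k => Rabs (x i - u k i) < eta)) as [N HN].
  { intros i. destruct (H i eta Heta) as [N HN]. exists N. intros k Hk.
    rewrite Rabs_minus_sym. apply HN; auto. }
  exists N. intros k Hk. apply Hs. apply HN; auto.
Qed.

Lemma vdist_vcv n (u : nat -> vec n) x :
  (forall e, 0 < e -> exists N, forall k, (k >= N)%nat -> vdist x (u k) < e) -> vcv u x.
Proof.
  intros H i e He. destruct (H e He) as [N HN]. exists N. intros k Hk. unfold R_dist.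
  rewrite Rabs_minus_sym. eapply Rle_lt_trans; [apply (coord_le_vnorm n (vsub x (u k)) i)|].
  apply HN; auto.
Qed.

Lemma vcv_of_vdist_inv_INR_S n (u : nat -> vec n) x :
  (forall k, vdist x (u k) < / INR (S k)) -> vcv u x.
Proof.
  intros H. apply vdist_vcv. intros e He. destruct (inv_INR_S_small e He) as [N HN].
  exists N. intros k Hk. specialize (HN k Hk). specialize (H k). lra.
Qed.

Lemma cv_of_dist_inv_INR_S (u : nat -> R) l :
  (forall k, Rabs (u k - l) < / INR (S k)) -> Un_cv u l.
Proof.
  intros H e He. destruct (inv_INR_S_small e He) as [N HN].
  exists N. intros k Hk. specialize (HN k Hk). specialize (H k). unfold R_dist. lra.
Qed.

Definition incr (phi : nat -> nat) : Prop := forall k, (phi k < phi (S k))%nat.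

Lemma incr_ge phi : incr phi -> forall k, (k <= phi k)%nat.
Proof. intros H; induction k; [lia|]. specialize (H k). lia. Qed.

Lemma incr_le phi : incr phi -> forall a b, (a <= b)%nat -> (phi a <= phi b)%nat.
Proof. intros H a b Hab. induction Hab; [lia|]. specialize (H m). lia. Qed.

Lemma incr_comp phi psi : incr phi -> incr psi -> incr (fun k => phi (psi k)).
Proof.
  intros H1 H2 k. pose proof (incr_le phi H1 (S (psi k)) (psi (S k)) (H2 k)).
  specialize (H1 (psi k)). lia.
Qed.

Lemma cv_subseq (u : nat -> R) l phi : Un_cv u l -> incr phi -> Un_cv (fun k => u (phi k)) l.
Proof.
  intros H Hp e He. destruct (H e He) as [N HN]. exists N. intros k Hk. apply HN.
  pose proof (incr_ge phi Hp k). lia.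
Qed.

Lemma vcv_subseq n (u : nat -> vec n) x phi : vcv u x -> incr phi -> vcv (fun k => u (phi k)) x.
Proof. intros H Hp i. apply (cv_subseq (fun k => u k i)); auto. Qed.

Lemma bolzano_weierstrass_R (u : nat -> R) M : (forall k, Rabs (u k) <= M) ->
  exists phi l, incr phi /\ Un_cv (fun k => u (phi k)) l.
Proof.
  intros HM.
  destruct (Rtopology.Bolzano_Weierstrass u (fun c => -M <= c <= M) (Rtopology.compact_P3 _ _))
    as [l Hl].
  { intros k. specialize (HM k). pose proof (Rle_abs (u k)). pose proof (Rle_abs (- u k)).
    rewrite Rabs_Ropp in *. lra. }
  assert (Hnear : forall N k, exists p, (N <= p)%nat /\ Rabs (u p - l) < / INR (S k)).
  { intros N k. pose (d := mkposreal _ (inv_INR_S_pos k)).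
    destruct (Hl (Rtopology.disc l d) N) as [p Hp]; [exists d; intros y Hy; exact Hy|].
    exists p; exact Hp. }
  destruct (choice (fun Nk p => (fst Nk <= p)%nat /\ Rabs (u p - l) < / INR (S (snd Nk))))
    as [pick Hpick]; [intros [N k]; apply Hnear|].
  pose (phi := fix phi k := match k with O => pick (O, O) | S k' => pick (S (phi k'), k) end).
  exists phi, l. split.
  - intro k. simpl. destruct (Hpick (S (phi k), S k)); simpl in *; lia.
  - apply cv_of_dist_inv_INR_S. intros [|k]; [apply (Hpick (O, O))|apply (Hpick (S (phi k), S k))].
Qed.

Lemma bolzano_weierstrass n (u : nat -> vec n) M : (forall k, vnorm (u k) <= M) ->
  exists phi x, incr phi /\ vcv (fun k => u (phi k)) x.
Proof.
  intros HM. assert (Hc : forall k i, Rabs (u k i) <= M)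
    by (intros k i; eapply Rle_trans; [apply coord_le_vnorm|apply HM]).
  clear HM. revert u Hc; induction n as [|n IH]; intros u Hc.
  - exists (fun k => k), (fun _ => 0). split; [intro; lia|]. intro i; inversion i.
  - destruct (bolzano_weierstrass_R (fun k => u k Fin.F1) M) as [phi1 [l [Hp1 Hl]]];
      [intros; apply Hc|].
    destruct (IH (fun k i => u (phi1 k) (Fin.FS i))) as [phi2 [x [Hp2 Hx]]]; [intros; apply Hc|].
    exists (fun k => phi1 (phi2 k)), (fun i => Fin.caseS' i (fun _ => R) l x).
    split; [apply incr_comp; auto|].
    intro i. apply (Fin.caseS' i); simpl.
    + apply (cv_subseq (fun k => u (phi1 k) Fin.F1)); auto.
    + intro p. apply (Hx p).
Qed.

Lemma vopen_eventually n (U : vec n -> Prop) (u : nat -> vec n) x :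
  vopen U -> U x -> vcv u x -> exists N, forall k, (k >= N)%nat -> U (u k).
Proof.
  intros HU Hx Hc. destruct (HU x Hx) as [e [He H]]. destruct (vcv_vdist n u x Hc e He) as [N HN].
  exists N; intros; apply H; auto.
Qed.

Lemma vclosed_limit n (C : vec n -> Prop) (u : nat -> vec n) x :
  vclosed C -> (forall k, C (u k)) -> vcv u x -> C x.
Proof.
  intros HC Hu Hc. apply NNPP; intro Hn.
  destruct (vopen_eventually n _ u x HC Hn Hc) as [N HN]. exact (HN N (le_n _) (Hu N)).
Qed.

Lemma continuous_on_limit n (K : vec n -> Prop) (G : vec n -> vec n) (u : nat -> vec n) x :
  vcontinuous_on K G -> K x -> (forall k, K (u k)) -> vcv u x -> vcv (fun k => G (u k)) (G x).
Proof.
  intros HG Hx Hu Hc. apply vdist_vcv. intros e He. destruct (HG x Hx e He) as [d [Hd H]].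
  destruct (vcv_vdist n u x Hc d Hd) as [N HN]. exists N. intros k Hk. apply H; auto.
Qed.

Lemma continuous_on_of_limits n (K : vec n -> Prop) (G : vec n -> vec n) :
  (forall u x, K x -> (forall k, K (u k)) -> vcv u x -> vcv (fun k => G (u k)) (G x)) ->
  vcontinuous_on K G.
Proof.
  intros H x Kx e He. apply NNPP; intro Hn.
  destruct (choice (fun k y => K y /\ vdist x y < / INR (S k) /\ e <= vdist (G x) (G y)))
    as [u Hu].
  { intros k. apply NNPP; intro Hk. apply Hn. exists (/ INR (S k)).
    split; [apply inv_INR_S_pos|]. intros y Ky Hxy. apply Rnot_le_lt. intro. apply Hk.
    exists y; auto. }
  assert (Hc : vcv u x) by (apply vcv_of_vdist_inv_INR_S; intros; apply Hu).
  destruct (vcv_vdist n _ _ (H u x Kx (fun k => proj1 (Hu k)) Hc) e He) as [N HN].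
  specialize (HN N (le_n _)). destruct (Hu N) as [_ [_ H3]]. lra.
Qed.

(** * Existence for monotone variational inequalities on compact convex sets *)

Lemma exists_minimizer n (C : vec n -> Prop) (h : vec n -> R) M :
  vclosed C -> (exists x, C x) -> (forall x, C x -> vnorm x <= M) ->
  (forall x, C x -> 0 <= h x) ->
  (forall u x, (forall k, C (u k)) -> C x -> vcv u x -> Un_cv (fun k => h (u k)) (h x)) ->
  exists x, C x /\ forall z, C z -> h x <= h z.
Proof.
  intros Hcl [x0 Hx0] Hb Hpos Hcont.
  destruct (completeness (fun r => exists x, C x /\ r = - h x)) as [m [Hub Hlub]].
  { exists 0. intros r [x [Hx ->]]. specialize (Hpos x Hx). lra. }
  { exists (- h x0), x0; auto. }
  destruct (choice (fun k x => C x /\ h x < - m + / INR (S k))) as [u Hu].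
  { intros k. pose proof (inv_INR_S_pos k). apply NNPP; intro Hn.
    enough (m <= m - / INR (S k)) by lra.
    apply Hlub. intros r [x [Hx ->]]. apply Rnot_lt_le. intro. apply Hn. exists x; split; auto; lra. }
  destruct (bolzano_weierstrass n u M) as [phi [x [Hphi Hx]]]; [intros k; apply Hb, Hu|].
  assert (Cx : C x) by (apply (vclosed_limit n C (fun k => u (phi k))); auto; intros; apply Hu).
  exists x; split; [exact Cx|].
  assert (h x <= - m).
  { replace (h x) with (h x - 0) by ring.
    apply (cv_le (fun k => h (u (phi k)) - / INR (S (phi k)))).
    - apply CV_minus; [apply Hcont; auto; intros; apply Hu|].
      apply (cv_subseq (fun k => / INR (S k))); auto using cv_inv_INR_S.
    - intros k. destruct (Hu (phi k)). lra. }
  intros z Hz. assert (- h z <= m) by (apply Hub; exists z; auto). lra.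
Qed.

(* [negpart u = min u 0]; its square is the C^1 penalty used to enforce [u >= 0]. *)
Definition negpart (u : R) : R := (u - Rabs u) / 2.

Lemma negpart_nonpos u : negpart u <= 0.
Proof. unfold negpart. pose proof (Rle_abs u). lra. Qed.

Lemma negpart_mul_self u : negpart u * u = negpart u * negpart u.
Proof.
  unfold negpart. destruct (Rle_or_lt 0 u);
    [rewrite Rabs_pos_eq by lra | rewrite Rabs_left by lra]; lra.
Qed.

Lemma negpart_eq0 u : negpart u = 0 -> 0 <= u.
Proof. unfold negpart. pose proof (Rle_abs (- u)). rewrite Rabs_Ropp in *. lra. Qed.

Lemma negpart_sq_shift a v :
  negpart (a + v) * negpart (a + v) <= negpart a * negpart a + 2 * negpart a * v + v * v.
Proof.
  unfold negpart. destruct (Rle_or_lt 0 a); destruct (Rle_or_lt 0 (a + v));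
    repeat first [ rewrite (Rabs_pos_eq a) by lra | rewrite (Rabs_left a) by lra
                 | rewrite (Rabs_pos_eq (a + v)) by lra | rewrite (Rabs_left (a + v)) by lra ];
    nra.
Qed.

Lemma negpart_sq_cv (u : nat -> R) l :
  Un_cv u l -> Un_cv (fun k => negpart (u k) * negpart (u k)) (negpart l * negpart l).
Proof.
  intros H. assert (Hn : Un_cv (fun k => negpart (u k)) (negpart l)).
  { apply (CV_mult (fun k => u k - Rabs (u k)) (fun _ => / 2)); [|apply cv_const].
    apply CV_minus; auto. apply cv_cvabs; auto. }
  apply CV_mult; auto.
Qed.

Lemma quadratic_first_order P Q : 0 <= Q ->
  (forall t, 0 < t <= 1 -> 0 <= -2 * t * P + t * t * Q) -> P <= 0.
Proof.
  intros HQ Ht. apply Rnot_lt_le; intro HP.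
  set (t := Rmin 1 (P / (Q + 1))).
  assert (Hr : 0 < P / (Q + 1)) by (apply Rdiv_lt_0_compat; lra).
  assert (Ht01 : 0 < t <= 1) by (unfold t, Rmin; destruct Rle_dec; lra).
  assert (HtQ : t * (Q + 1) <= P).
  { assert (t <= P / (Q + 1)) by apply Rmin_r.
    apply Rmult_le_reg_r with (/ (Q + 1)); [apply Rinv_0_lt_compat; lra|].
    rewrite Rmult_assoc, Rinv_r, Rmult_1_r by lra. auto. }
  specialize (Ht t Ht01). nra.
Qed.

Section FiniteMinty.

Variables (n k : nat) (G : vec n -> vec n) (y : Fin.t k -> vec n).

Let gap (x : vec n) (i : Fin.t k) : R := dot (G (y i)) (vsub (y i) x).
Let penalty (x : vec n) : R := fsum k (fun i => negpart (gap x i) * negpart (gap x i)).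

Lemma penalty_first_order (C : vec n -> Prop) xs : vconvex C -> C xs ->
  (forall z, C z -> penalty xs <= penalty z) ->
  forall z, C z -> 0 <= fsum k (fun i => - negpart (gap xs i) * dot (G (y i)) (vsub z xs)).
Proof.
  intros HC Cxs Hmin z Cz.
  set (b i := dot (G (y i)) (vsub z xs)).
  set (P := fsum k (fun i => negpart (gap xs i) * b i)).
  set (Q := fsum k (fun i => b i * b i)).
  assert (HQ : 0 <= Q) by (apply fsum_nonneg; intros; nra).
  assert (Ht : forall t, 0 < t <= 1 -> 0 <= -2 * t * P + t * t * Q).
  { intros t Ht. set (xt := fun i => t * z i + (1 - t) * xs i).
    assert (Hgap : forall i, gap xt i = gap xs i + - t * b i).
    { intros i. unfold gap, b. rewrite <- (dot_vsub_sub n (G (y i)) (y i) xt xs).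
      unfold xt. rewrite dot_vsub_convex. ring. }
    assert (Hle : penalty xt <= fsum k (fun i => negpart (gap xs i) * negpart (gap xs i)
                    + 2 * negpart (gap xs i) * (- t * b i) + (- t * b i) * (- t * b i))).
    { apply fsum_le. intros i. rewrite Hgap. apply negpart_sq_shift. }
    rewrite !fsum_plus in Hle.
    replace (fsum k (fun i => 2 * negpart (gap xs i) * (- t * b i))) with (-2 * t * P) in Hle
      by (unfold P; rewrite <- fsum_scal; apply fsum_ext; intros; ring).
    replace (fsum k (fun i => - t * b i * (- t * b i))) with (t * t * Q) in Hle
      by (unfold Q; rewrite <- fsum_scal; apply fsum_ext; intros; ring).
    pose proof (Hmin xt (HC z xs t Cz Cxs ltac:(lra))). unfold penalty in *. lra. }
  pose proof (quadratic_first_order P Q HQ Ht).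
  unfold P in *. rewrite (fsum_ext k _ (fun i => -1 * (negpart (gap xs i) * b i)))
    by (intros; unfold b; ring).
  rewrite fsum_scal. lra.
Qed.

Lemma monotone_double_sum_nonneg (mu : Fin.t k -> R) : (forall i, 0 <= mu i) ->
  (forall i j, 0 <= dot (vsub (G (y i)) (G (y j))) (vsub (y i) (y j))) ->
  0 <= fsum k (fun i => fsum k (fun j => mu i * mu j * dot (G (y i)) (vsub (y i) (y j)))).
Proof.
  intros Hmu Hmon.
  set (T := fsum k (fun i => fsum k (fun j => mu i * mu j * dot (G (y i)) (vsub (y i) (y j))))).
  assert (Hsym : T + T = fsum k (fun i => fsum k (fun j =>
             mu i * mu j * dot (vsub (G (y i)) (G (y j))) (vsub (y i) (y j))))).
  { unfold T at 2. rewrite fsum_exchange. unfold T. rewrite <- fsum_plus.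
    apply fsum_ext; intros i. rewrite <- fsum_plus. apply fsum_ext; intros j.
    rewrite dot_vsub_vsub. ring. }
  enough (0 <= T + T) by lra. rewrite Hsym.
  apply fsum_nonneg; intros i; apply fsum_nonneg; intros j.
  apply Rmult_le_pos; [apply Rmult_le_pos|]; auto.
Qed.

Lemma finite_minty (K C : vec n -> Prop) M :
  (forall x, C x -> K x) -> monotone_on K G -> vclosed C -> vconvex C ->
  (exists x, C x) -> (forall x, C x -> vnorm x <= M) -> (forall i, C (y i)) ->
  exists x, C x /\ forall i, 0 <= dot (G (y i)) (vsub (y i) x).
Proof.
  intros HCK Hmon Hcl Hcv Hne Hb Hy.
  destruct (exists_minimizer n C penalty M Hcl Hne Hb) as [xs [Cxs Hmin]].
  { intros x _. apply fsum_nonneg; intros; nra. }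
  { intros u x _ _ Hu. apply fsum_cv. intros i. apply (negpart_sq_cv (fun k => gap (u k) i)).
    apply dot_cv; [apply vcv_const|apply vcv_sub; auto using vcv_const]. }
  exists xs; split; [exact Cxs|].
  set (mu i := - negpart (gap xs i)).
  assert (Hmu : forall i, 0 <= mu i) by (intros; unfold mu; pose proof (negpart_nonpos (gap xs i)); lra).
  set (S := fsum k mu). set (Q := fsum k (fun i => mu i * mu i)).
  set (T := fsum k (fun i => fsum k (fun j => mu i * mu j * dot (G (y i)) (vsub (y i) (y j))))).
  assert (HT : 0 <= T).
  { apply monotone_double_sum_nonneg; [exact Hmu|]. intros i j. apply Hmon; apply HCK, Hy. }
  (* Test the first-order condition at each [y j] and average with weights [mu j]. *)
  assert (Havg : 0 <= fsum k (fun j => mu j * fsum k (fun i => mu i * dot (G (y i)) (vsub (y j) xs)))).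
  { apply fsum_nonneg; intros j. apply Rmult_le_pos; auto.
    apply (penalty_first_order C xs); auto. }
  assert (Hexpand : fsum k (fun j => mu j * fsum k (fun i => mu i * dot (G (y i)) (vsub (y j) xs)))
                    = - (S * Q) - T).
  { rewrite (fsum_ext k _ (fun j => mu j * fsum k (fun i => - (mu i * mu i))
         - fsum k (fun i => mu i * mu j * dot (G (y i)) (vsub (y i) (y j))))).
    - rewrite fsum_minus, fsum_exchange, fsum_scal_r.
      rewrite fsum_opp. fold Q. unfold S, T. ring.
    - intros j. rewrite <- fsum_scal, <- fsum_scal, <- fsum_minus. apply fsum_ext; intros i.
      assert (Hg : mu i * gap xs i = - (mu i * mu i))
        by (unfold mu; rewrite <- Ropp_mult_distr_l, negpart_mul_self; ring).
      replace (dot (G (y i)) (vsub (y j) xs)) with (gap xs i - dot (G (y i)) (vsub (y i) (y j)))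
        by (unfold gap; rewrite <- (dot_vsub_sub n (G (y i)) (y i) (y j) xs); ring).
      rewrite Rmult_minus_distr_l, Hg. ring. }
  assert (HSQ : S * Q <= 0) by lra.
  intros i. apply negpart_eq0. fold (gap xs i).
  assert (mu i * (mu i * mu i) <= S * Q).
  { apply Rmult_le_compat; auto; [nra|apply fsum_ge_term; auto|].
    apply (fsum_ge_term k (fun i => mu i * mu i)). intros; nra. }
  destruct (Req_dec (mu i) 0) as [H0|H0]; [unfold mu in H0; lra|].
  assert (0 < mu i) by (pose proof (Hmu i); lra).
  assert (0 < mu i * (mu i * mu i)) by (repeat apply Rmult_lt_0_compat; auto). lra.
Qed.

End FiniteMinty.

Lemma finite_net_list n (C : vec n -> Prop) M e : (forall x, C x -> vnorm x <= M) -> 0 < e ->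
  exists l : list (vec n), (forall y, In y l -> C y) /\
    forall z, C z -> exists y, In y l /\ vdist z y < e.
Proof.
  intros Hb He. apply NNPP; intro Hn.
  destruct (choice (fun l z => (forall y, In y l -> C y) ->
                       C z /\ forall y, In y l -> e <= vdist z y)) as [next Hnext].
  { intros l. destruct (classic (forall y, In y l -> C y)) as [Hl|Hl].
    - apply NNPP; intro Hz. apply Hn. exists l. split; [exact Hl|].
      intros z Cz. apply NNPP; intro Hfar. apply Hz. exists z. intros _. split; [exact Cz|].
      intros y Hy. apply Rnot_lt_le. intro. apply Hfar. exists y; auto.
    - exists (fun _ => 0). intros; contradiction. }
  (* Greedily pick points pairwise [e]-apart; a convergent subsequence contradicts this. *)
  pose (L := fix L k := match k with O => nil | S k' => next (L k') :: L k' end).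
  pose (s k := next (L k)).
  assert (HL : forall k y, In y (L k) -> C y).
  { induction k as [|k IH]; simpl; intros y Hy; [contradiction|].
    destruct Hy as [<-|Hy]; auto. apply Hnext; auto. }
  assert (Hfar : forall i j, (i < j)%nat -> e <= vdist (s j) (s i)).
  { intros i j Hij. apply Hnext; [apply HL|]. induction Hij; simpl; auto. }
  destruct (bolzano_weierstrass n s M) as [phi [x [Hphi Hx]]]; [intros k; apply Hb, Hnext, HL|].
  destruct (vcv_vdist n _ x Hx (e / 2)) as [N HN]; [lra|].
  pose proof (vdist_triangle n (s (phi (S N))) x (s (phi N))).
  rewrite (vdist_sym n (s (phi (S N))) x) in H.
  pose proof (HN N (le_n _)). pose proof (HN (S N) (le_S _ _ (le_n _))).
  pose proof (Hfar _ _ (Hphi N)). lra.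
Qed.

Lemma finite_net n (C : vec n -> Prop) M e : (forall x, C x -> vnorm x <= M) -> 0 < e ->
  exists k (y : Fin.t k -> vec n), (forall i, C (y i)) /\
    forall z, C z -> exists i, vdist z (y i) < e.
Proof.
  intros Hb He. destruct (finite_net_list n C M e Hb He) as [l [HlC Hcov]].
  exists (length l), (fun i => nth (proj1_sig (Fin.to_nat i)) l (fun _ => 0)). split.
  - intros i. apply HlC, nth_In. exact (proj2_sig (Fin.to_nat i)).
  - intros z Cz. destruct (Hcov z Cz) as [y [Hy Hzy]].
    destruct (In_nth l y (fun _ => 0) Hy) as [p [Hp Hnth]].
    exists (Fin.of_nat_lt Hp). rewrite Fin.to_nat_of_nat. simpl. rewrite Hnth. exact Hzy.
Qed.

Definition MintySol {n} (G : vec n -> vec n) (C : vec n -> Prop) (x : vec n) : Prop :=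
  C x /\ forall y, C y -> 0 <= dot (G y) (vsub y x).

Section MintyExistence.

Variables (n : nat) (K C : vec n -> Prop) (G : vec n -> vec n) (M : R).
Hypotheses (HCK : forall x, C x -> K x) (Hmon : monotone_on K G) (Hcont : vcontinuous_on K G)
  (Hcl : vclosed C) (Hcv : vconvex C) (Hne : exists x, C x)
  (Hb : forall x, C x -> vnorm x <= M).

Lemma approximate_minty e : 0 < e -> exists x, C x /\
  forall y, C y -> exists w, C w /\ vdist y w < e /\ 0 <= dot (G w) (vsub w x).
Proof.
  intros He. destruct (finite_net n C M e Hb He) as [k [y [Hy Hcov]]].
  destruct (finite_minty n k G y K C M HCK Hmon Hcl Hcv Hne Hb Hy) as [x [Cx Hx]].
  exists x; split; [exact Cx|]. intros z Cz. destruct (Hcov z Cz) as [i Hi].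
  exists (y i); auto.
Qed.

Lemma MintySol_exists : exists x, MintySol G C x.
Proof.
  destruct (choice (fun k x => C x /\ forall y, C y ->
      exists w, C w /\ vdist y w < / INR (S k) /\ 0 <= dot (G w) (vsub w x))) as [u Hu].
  { intros k. apply approximate_minty, inv_INR_S_pos. }
  destruct (bolzano_weierstrass n u M) as [phi [x [Hphi Hx]]]; [intros; apply Hb, Hu|].
  exists x. split; [apply (vclosed_limit n C (fun k => u (phi k))); auto; intros; apply Hu|].
  intros y Cy.
  destruct (choice (fun k w => C w /\ vdist y w < / INR (S k) /\ 0 <= dot (G w) (vsub w (u k))))
    as [w Hw]; [intros k; apply Hu; auto|].
  assert (Hwc : vcv w y) by (apply vcv_of_vdist_inv_INR_S; intros; apply Hw).
  apply (cv_ge (fun k => dot (G (w (phi k))) (vsub (w (phi k)) (u (phi k))))); [|intros; apply Hw].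
  apply dot_cv; [|apply vcv_sub; auto; apply vcv_subseq; auto].
  apply (continuous_on_limit n K G); auto; [intros; apply HCK, Hw|apply vcv_subseq; auto].
Qed.

End MintyExistence.

Lemma MintySol_Sol n (K C : vec n -> Prop) (G : vec n -> vec n) :
  (forall x, C x -> K x) -> vconvex C -> vcontinuous_on K G ->
  forall x, MintySol G C x -> Sol G C x.
Proof.
  intros HCK Hcv Hcont x [Cx Hm]. split; [exact Cx|]. intros y Cy.
  pose (z k := fun i => / INR (S k) * y i + (1 - / INR (S k)) * x i).
  assert (Ht : forall k, 0 < / INR (S k) <= 1).
  { intros k. split; [apply inv_INR_S_pos|]. rewrite <- Rinv_1.
    apply Rinv_le_contravar; [lra|]. rewrite S_INR. pose proof (pos_INR k). lra. }
  assert (Cz : forall k, C (z k)) by (intros k; apply Hcv; auto; specialize (Ht k); lra).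
  assert (Hz : forall k, 0 <= dot (G (z k)) (vsub y x)).
  { intros k. specialize (Hm (z k) (Cz k)).
    replace (dot (G (z k)) (vsub (z k) x)) with (/ INR (S k) * dot (G (z k)) (vsub y x)) in Hm
      by (symmetry; apply dot_vsub_convex).
    specialize (Ht k). nra. }
  assert (Hzc : vcv z x).
  { intros i. pose proof (vcv_convex_comb n _ 0 x y cv_inv_INR_S i) as Hc.
    simpl in Hc. replace (0 * y i + (1 - 0) * x i) with (x i) in Hc by ring. exact Hc. }
  apply (cv_ge (fun k => dot (G (z k)) (vsub y x))); [|exact Hz].
  apply dot_cv; [|apply vcv_const]. apply (continuous_on_limit n K G); auto.
Qed.

Lemma Sol_MintySol n (K C : vec n -> Prop) (G : vec n -> vec n) :
  (forall x, C x -> K x) -> monotone_on K G -> forall x, Sol G C x -> MintySol G C x.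
Proof.
  intros HCK Hmon x [Cx Hx]. split; [exact Cx|]. intros y Cy.
  specialize (Hx y Cy). pose proof (Hmon x y (HCK x Cx) (HCK y Cy)) as H.
  rewrite dot_vsub_vsub, (dot_vsub_swap n (G x) x y) in H. lra.
Qed.

Lemma Sol_exists n (K C : vec n -> Prop) (G : vec n -> vec n) M :
  (forall x, C x -> K x) -> monotone_on K G -> vcontinuous_on K G ->
  vclosed C -> vconvex C -> (exists x, C x) -> (forall x, C x -> vnorm x <= M) ->
  exists x, Sol G C x.
Proof.
  intros HCK Hmon Hcont Hcl Hcv Hne Hb.
  destruct (MintySol_exists n K C G M HCK Hmon Hcont Hcl Hcv Hne Hb) as [x Hx].
  exists x. apply (MintySol_Sol n K); auto.
Qed.

Lemma Sol_convex n (K C : vec n -> Prop) (G : vec n -> vec n) :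
  (forall x, C x -> K x) -> vconvex C -> monotone_on K G -> vcontinuous_on K G ->
  vconvex (Sol G C).
Proof.
  intros HCK Hcv Hmon Hcont x y t Sx Sy Ht.
  destruct (Sol_MintySol n K C G HCK Hmon x Sx) as [Cx Hx].
  destruct (Sol_MintySol n K C G HCK Hmon y Sy) as [Cy Hy].
  apply (MintySol_Sol n K); auto. split; [apply Hcv; auto|]. intros w Cw.
  replace (dot (G w) (vsub w (fun i => t * x i + (1 - t) * y i)))
    with (t * dot (G w) (vsub w x) + (1 - t) * dot (G w) (vsub w y))
    by (unfold dot, vsub; rewrite <- !fsum_scal, <- fsum_plus; apply fsum_ext; intros; ring).
  specialize (Hx w Cw). specialize (Hy w Cw). nra.
Qed.

(** * Connectedness *)

Definition open_in_unit_interval (P : R -> Prop) : Prop :=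
  forall t, 0 <= t <= 1 -> P t ->
    exists d, 0 < d /\ forall s, 0 <= s <= 1 -> Rabs (s - t) < d -> P s.

Lemma unit_interval_connected (P Q : R -> Prop) :
  open_in_unit_interval P -> open_in_unit_interval Q ->
  (forall t, 0 <= t <= 1 -> P t \/ Q t) -> (forall t, 0 <= t <= 1 -> P t -> Q t -> False) ->
  P 0 -> Q 1 -> False.
Proof.
  intros HP HQ Hcov Hdis P0 Q1.
  destruct (completeness (fun t => 0 <= t <= 1 /\ forall s, 0 <= s <= t -> P s)) as [T [HT1 HT2]].
  { exists 1. intros t [Ht _]; lra. }
  { exists 0. split; [lra|]. intros s Hs. replace s with 0 by lra. auto. }
  assert (T0 : 0 <= T).
  { apply HT1. split; [lra|]. intros s Hs. replace s with 0 by lra. auto. }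
  assert (T1 : T <= 1) by (apply HT2; intros t [Ht _]; lra).
  assert (Hbelow : forall s, 0 <= s < T -> P s).
  { intros s Hs. apply NNPP; intro Hn. enough (T <= s) by lra. apply HT2.
    intros t [Ht Ht2]. apply Rnot_lt_le; intro. apply Hn, Ht2; lra. }
  destruct (Hcov T (conj T0 T1)) as [PT|QT].
  - destruct (Req_dec T 1) as [E1|E1]; [subst; apply (Hdis 1); auto; lra|].
    destruct (HP T (conj T0 T1) PT) as [d [Hd Hd2]].
    set (t' := Rmin 1 (T + d / 2)).
    assert (Ht' : T < t' <= 1) by (unfold t', Rmin; destruct Rle_dec; lra).
    enough (t' <= T) by lra. apply HT1. split; [lra|]. intros s Hs.
    destruct (Rlt_or_le s T); [apply Hbelow; lra|].
    apply Hd2; [lra|]. rewrite Rabs_pos_eq; unfold t', Rmin in *; destruct Rle_dec; lra.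
  - destruct (Req_dec T 0) as [E0|E0]; [subst; apply (Hdis 0); auto; lra|].
    destruct (HQ T (conj T0 T1) QT) as [d [Hd Hd2]].
    set (s := Rmax 0 (T - d / 2)).
    assert (Hs : 0 <= s < T) by (unfold s, Rmax; destruct Rle_dec; lra).
    apply (Hdis s); [lra|apply Hbelow; auto|]. apply Hd2; [lra|].
    rewrite Rabs_left; unfold s, Rmax in *; destruct Rle_dec; lra.
Qed.

Lemma vconnected_in_one_part n (A U V : vec n -> Prop) : vconnected A -> vopen U -> vopen V ->
  (forall x, A x -> U x \/ V x) -> (forall x, A x -> U x -> V x -> False) ->
  (forall x, A x -> U x) \/ (forall x, A x -> V x).
Proof.
  intros HA HU HV Hcov Hdis. destruct (classic (forall x, A x -> U x)) as [|HnU]; [left; auto|].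
  right. intros y Ay. destruct (Hcov y Ay) as [Uy|]; auto. exfalso.
  apply not_all_ex_not in HnU. destruct HnU as [x Hx]. apply imply_to_and in Hx.
  destruct Hx as [Ax Ux]. destruct (Hcov x Ax) as [|Vx]; [contradiction|].
  apply HA. exists U, V. repeat split; eauto.
Qed.

Lemma vconnected_singleton n (a : vec n) : vconnected (fun x => x = a).
Proof.
  intros [U [V [_ [_ [_ [[x [-> Ux]] [[y [-> Vy]] Hdis]]]]]]]. exact (Hdis a eq_refl Ux Vy).
Qed.

Lemma vconnected_union n (A B : vec n -> Prop) : vconnected A -> vconnected B ->
  (exists x, A x /\ B x) -> vconnected (fun x => A x \/ B x).
Proof.
  intros HA HB [p [Ap Bp]] [U [V [HU [HV [Hcov [[a [ABa Ua]] [[b [ABb Vb]] Hdis]]]]]]].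
  destruct (vconnected_in_one_part n A U V HA HU HV (fun x H => Hcov x (or_introl H))
              (fun x H => Hdis x (or_introl H))) as [AU|AV];
  destruct (vconnected_in_one_part n B U V HB HU HV (fun x H => Hcov x (or_intror H))
              (fun x H => Hdis x (or_intror H))) as [BU|BV];
  try (apply (Hdis p); auto; fail).
  - destruct ABb as [Ab|Bb]; apply (Hdis b); auto.
  - destruct ABa as [Aa|Ba]; apply (Hdis a); auto.
Qed.

Lemma conn_component_absorbs n (W A D : vec n -> Prop) : conn_component W A ->
  vconnected D -> (forall x, D x -> W x) -> (exists x, D x /\ A x) -> forall x, D x -> A x.
Proof.
  intros [_ [HAW [HAc Hmax]]] HD HDW [p [Dp Ap]] x Dx.
  apply (Hmax (fun x => A x \/ D x)); auto.
  - apply vconnected_union; auto. exists p; auto.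
  - intros y [Ay|Dy]; auto.
Qed.

(* The second clause is upper semicontinuity of [s |-> E s]. *)
Definition usc_connected_family {n} (E : R -> vec n -> Prop) : Prop :=
  (forall s, 0 <= s <= 1 -> (exists x, E s x) /\ vconnected (E s)) /\
  forall O, vopen O -> open_in_unit_interval (fun s => forall x, E s x -> O x).

Lemma usc_connected_family_links n (E : R -> vec n -> Prop) (U V : vec n -> Prop) :
  usc_connected_family E -> vopen U -> vopen V ->
  (forall s x, 0 <= s <= 1 -> E s x -> U x \/ V x) ->
  (forall s x, 0 <= s <= 1 -> E s x -> U x -> V x -> False) ->
  forall a b, E 0 a -> U a -> E 1 b -> V b -> False.
Proof.
  intros [Hfib Husc] HU HV Hcov Hdis a b Ea Ua Eb Vb.
  assert (Hone : forall s, 0 <= s <= 1 -> (forall x, E s x -> U x) \/ (forall x, E s x -> V x))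
    by (intros s Hs; apply vconnected_in_one_part; [apply Hfib, Hs|..]; eauto).
  apply (unit_interval_connected (fun s => forall x, E s x -> U x)
                                 (fun s => forall x, E s x -> V x)); auto.
  - intros s Hs HUs HVs. destruct (proj1 (Hfib s Hs)) as [x Ex]. apply (Hdis s x); auto.
  - destruct (Hone 0 ltac:(lra)) as [|H0]; auto. exfalso. apply (Hdis 0 a); auto; lra.
  - destruct (Hone 1 ltac:(lra)) as [H1|]; auto. exfalso. apply (Hdis 1 b); auto; lra.
Qed.

Lemma vconnected_of_usc_links n (D : vec n -> Prop) :
  (forall a b, D a -> D b -> exists E, usc_connected_family E /\
     (forall s x, 0 <= s <= 1 -> E s x -> D x) /\ E 0 a /\ E 1 b) ->
  vconnected D.
Proof.
  intros Hlink [U [V [HU [HV [Hcov [[a [Da Ua]] [[b [Db Vb]] Hdis]]]]]]].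
  destruct (Hlink a b Da Db) as [E [HE [HED [Ea Eb]]]].
  exact (usc_connected_family_links n E U V HE HU HV (fun s x Hs Ex => Hcov x (HED s x Hs Ex))
           (fun s x Hs Ex => Hdis x (HED s x Hs Ex)) a b Ea Ua Eb Vb).
Qed.

Lemma vdist_convex_comb_small n (a b : vec n) e : 0 < e -> exists d, 0 < d /\
  forall s t, Rabs (s - t) < d ->
    vdist (fun i => t * b i + (1 - t) * a i) (fun i => s * b i + (1 - s) * a i) < e.
Proof.
  intros He. pose proof (vnorm_nonneg n (vsub b a)) as Hba. fold (vdist b a) in Hba.
  exists (e / (vdist b a + 1)). split; [apply Rdiv_lt_0_compat; lra|].
  intros s t Hst. rewrite vdist_convex_comb, Rabs_minus_sym.
  apply Rle_lt_trans with (Rabs (s - t) * (vdist b a + 1)); [pose proof (Rabs_pos (s - t)); nra|].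
  apply Rmult_lt_reg_r with (/ (vdist b a + 1)); [apply Rinv_0_lt_compat; lra|].
  rewrite Rmult_assoc, Rinv_r, Rmult_1_r by lra. exact Hst.
Qed.

Lemma vconvex_connected n (E : vec n -> Prop) : vconvex E -> vconnected E.
Proof.
  intros HE. apply vconnected_of_usc_links. intros a b Ea Eb.
  pose (p s := fun i => s * b i + (1 - s) * a i).
  exists (fun s x => x = p s). split; [split|split; [|split]].
  - intros s _. split; [exists (p s); reflexivity|apply vconnected_singleton].
  - intros O HO t Ht Ot. destruct (HO (p t) (Ot _ eq_refl)) as [e [He He2]].
    destruct (vdist_convex_comb_small n a b e He) as [d [Hd Hd2]].
    exists d. split; [exact Hd|]. intros s Hs Hst x ->. apply He2, Hd2. exact Hst.
  - intros s x Hs ->. apply HE; auto; lra.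
  - apply functional_extensionality. intros i. unfold p. ring.
  - apply functional_extensionality. intros i. unfold p. ring.
Qed.

(** * Truncation and the parametric problem *)

Definition trunc {n} (K : vec n -> Prop) (R0 : R) (x : vec n) : Prop := K x /\ vnorm x <= R0.

Lemma trunc_closed n (K : vec n -> Prop) R0 : vclosed K -> vclosed (trunc K R0).
Proof.
  intros HK x Hx. destruct (classic (K x)) as [Kx|Kx].
  - assert (R0 < vnorm x) by (apply Rnot_le_lt; intro; apply Hx; split; auto).
    exists (vnorm x - R0). split; [lra|]. intros y Hy [_ Hy2].
    pose proof (vnorm_le_vdist n x y). lra.
  - destruct (HK x Kx) as [e [He H]]. exists e; split; auto. intros y Hy [Ky _]. exact (H y Hy Ky).
Qed.

Lemma trunc_convex n (K : vec n -> Prop) R0 : vconvex K -> vconvex (trunc K R0).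
Proof.
  intros HK x y t [Kx Hx] [Ky Hy] Ht. split; [apply HK; auto|].
  eapply Rle_trans; [apply vnorm_convex; auto|nra].
Qed.

Lemma Sol_subset n (G : vec n -> vec n) (K C : vec n -> Prop) x :
  (forall y, C y -> K y) -> Sol G K x -> C x -> Sol G C x.
Proof. intros HCK [_ Hx] Cx. split; [exact Cx|]. intros y Cy. apply Hx, HCK, Cy. Qed.

Lemma vconvex_ball n (c : vec n) d : vconvex (fun x => vdist c x < d).
Proof.
  intros x y t Hx Hy Ht. unfold vdist.
  rewrite (vnorm_ext n _ (fun i => t * vsub c x i + (1 - t) * vsub c y i))
    by (intros; unfold vsub; ring).
  eapply Rle_lt_trans; [apply vnorm_convex; auto|]. unfold vdist in Hx, Hy.
  assert ((1 - t) * vnorm (vsub c y) <= (1 - t) * d) by (apply Rmult_le_compat_l; lra).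
  destruct (Req_dec t 0) as [->|Ht0]; [lra|].
  assert (t * vnorm (vsub c x) < t * d) by (apply Rmult_lt_compat_l; lra). lra.
Qed.

Lemma vopen_norm_lt n R0 : vopen (fun x : vec n => vnorm x < R0).
Proof.
  intros x Hx. exists (R0 - vnorm x). split; [lra|]. intros y Hy.
  pose proof (vnorm_le_vdist n y x). rewrite vdist_sym in Hy. lra.
Qed.

Lemma Sol_trunc_interior n (K : vec n -> Prop) (G : vec n -> vec n) R0 x : vconvex K ->
  Sol G (trunc K R0) x -> vnorm x < R0 -> Sol G K x.
Proof.
  intros HK [[Kx Hx] Hs] Hlt. split; [exact Kx|]. intros y Ky.
  pose proof (vnorm_nonneg n y). pose proof (vnorm_nonneg n x).
  set (s := Rmin 1 ((R0 - vnorm x) / (vnorm y + 1))).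
  assert (Hs0 : 0 < (R0 - vnorm x) / (vnorm y + 1)) by (apply Rdiv_lt_0_compat; lra).
  assert (Hs1 : 0 < s <= 1) by (unfold s, Rmin; destruct Rle_dec; lra).
  assert (Hs2 : s * (vnorm y + 1) <= R0 - vnorm x).
  { assert (s <= (R0 - vnorm x) / (vnorm y + 1)) by apply Rmin_r.
    apply Rmult_le_reg_r with (/ (vnorm y + 1)); [apply Rinv_0_lt_compat; lra|].
    rewrite Rmult_assoc, Rinv_r, Rmult_1_r by lra. auto. }
  assert (Hz : trunc K R0 (fun i => s * y i + (1 - s) * x i)).
  { split; [apply HK; auto; lra|]. eapply Rle_trans; [apply vnorm_convex; lra|nra]. }
  specialize (Hs _ Hz). rewrite dot_vsub_convex in Hs. nra.
Qed.

Lemma Sol_trunc_lt n (K : vec n -> Prop) (G : vec n -> vec n) r x0 :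
  vconvex K -> monotone_on K G -> vcontinuous_on K G ->
  (forall x, Sol G K x -> vnorm x <= r) -> Sol G K x0 ->
  forall x, Sol G (trunc K (r + 1)) x -> vnorm x < r + 1.
Proof.
  intros HK Hmon Hcont Hr Hx0 x Hx. apply Rnot_le_lt. intro Hfar.
  pose proof (Hr x0 Hx0) as Hx0r. pose proof (vnorm_nonneg n x0).
  assert (HtK : forall z, trunc K (r + 1) z -> K z) by (intros z []; auto).
  assert (Sx0 : Sol G (trunc K (r + 1)) x0)
    by (apply (Sol_subset n G K); auto; split; [apply Hx0|lra]).
  (* The point [t x + (1 - t) x0] with [t = (4r + 1) / (4r + 2)] is an interior solution,
     hence a solution on [K], yet it is too far out. *)
  set (t := (2 * r + / 2) / (2 * r + 1)).
  assert (Ht : t * (2 * r + 1) = 2 * r + / 2) by (unfold t; field; lra).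
  assert (Ht01 : 0 < t < 1).
  { split; [unfold t; apply Rdiv_lt_0_compat; lra|].
    apply Rmult_lt_reg_r with (2 * r + 1); lra. }
  set (z := fun i => t * x i + (1 - t) * x0 i).
  assert (Sz : Sol G (trunc K (r + 1)) z)
    by (apply (Sol_convex n K); auto; [apply trunc_convex; auto|lra]).
  assert (Hxb : vnorm x <= r + 1) by apply Hx.
  assert (Hz : vnorm z < r + 1).
  { eapply Rle_lt_trans; [apply vnorm_convex; lra|].
    assert (t * vnorm x <= t * (r + 1)) by (apply Rmult_le_compat_l; lra).
    assert ((1 - t) * vnorm x0 <= (1 - t) * r) by (apply Rmult_le_compat_l; lra). lra. }
  pose proof (Hr z (Sol_trunc_interior n K G (r + 1) z HK Sz Hz)) as Hzr.
  assert (Htri : vnorm (fun i => t * x i) <= vnorm z + vnorm (fun i => (1 - t) * x0 i)).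
  { rewrite (vnorm_ext n (fun i => t * x i) (fun i => z i + (- (1 - t)) * x0 i))
      by (intros; unfold z; ring).
    eapply Rle_trans; [apply vnorm_triangle|]. rewrite !vnorm_scal, Rabs_Ropp. lra. }
  rewrite !vnorm_scal, !Rabs_pos_eq in Htri by lra. nra.
Qed.

Section ParametricVI.

Variables (m n : nat) (K : vec n -> Prop) (F : Fin.t m -> vec n -> vec n).
Hypotheses (hKcl : vclosed K) (hKcv : vconvex K)
  (hFc : forall l, vcontinuous_on K (F l)) (hFmon : forall l, monotone_on K (F l)).

Lemma dot_fsum_l (g : Fin.t m -> vec n) (c : vec m) v :
  dot (fun i => fsum m (fun l => c l * g l i)) v = fsum m (fun l => c l * dot (g l) v).
Proof.
  unfold dot.
  rewrite (fsum_ext n _ (fun i => fsum m (fun l => c l * g l i * v i)))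
    by (intros; rewrite <- fsum_scal_r; apply fsum_ext; intros; ring).
  rewrite fsum_exchange. apply fsum_ext; intros; rewrite <- fsum_scal; apply fsum_ext; intros; ring.
Qed.

Lemma Fcomb_monotone xi : (forall l, 0 <= xi l) -> monotone_on K (Fcomb F xi).
Proof.
  intros Hxi x y Kx Ky.
  rewrite (dot_ext n _ (fun i => fsum m (fun l => xi l * vsub (F l y) (F l x) i)) _ (vsub y x));
    [|intros i; unfold vsub, Fcomb; rewrite <- fsum_minus; apply fsum_ext; intros; ring
     |reflexivity].
  rewrite dot_fsum_l. apply fsum_nonneg. intros l. apply Rmult_le_pos; auto. apply hFmon; auto.
Qed.

Lemma Fcomb_limit (xs : nat -> vec m) xi (zs : nat -> vec n) z :
  vcv xs xi -> vcv zs z -> K z -> (forall k, K (zs k)) ->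
  vcv (fun k => Fcomb F (xs k) (zs k)) (Fcomb F xi z).
Proof.
  intros Hx Hz Kz Kzs i. apply (fsum_cv m (fun k l => xs k l * F l (zs k) i)). intros l.
  apply CV_mult; [apply Hx|]. apply (continuous_on_limit n K (F l) zs z (hFc l) Kz Kzs Hz).
Qed.

Lemma Fcomb_continuous xi : vcontinuous_on K (Fcomb F xi).
Proof.
  apply continuous_on_of_limits. intros u x Kx Ku Hu.
  apply (Fcomb_limit (fun _ => xi)); auto using vcv_const.
Qed.

Lemma Sol_Fcomb_closed_graph (C : vec n -> Prop) (xs : nat -> vec m) xi (zs : nat -> vec n) z :
  vclosed C -> (forall x, C x -> K x) -> vcv xs xi -> vcv zs z ->
  (forall k, Sol (Fcomb F (xs k)) C (zs k)) -> Sol (Fcomb F xi) C z.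
Proof.
  intros HC HCK Hx Hz Hs.
  assert (Cz : C z) by (apply (vclosed_limit n C zs); auto; intros; apply Hs).
  split; [exact Cz|]. intros y Cy.
  apply (cv_ge (fun k => dot (Fcomb F (xs k) (zs k)) (vsub y (zs k)))); [|intros; apply Hs; auto].
  apply dot_cv; [apply Fcomb_limit; auto; intros; apply HCK, Hs|apply vcv_sub; auto using vcv_const].
Qed.

Lemma Sol_Fcomb_usc (C : vec n -> Prop) M xi (O : vec n -> Prop) :
  vclosed C -> (forall x, C x -> K x) -> (forall x, C x -> vnorm x <= M) -> vopen O ->
  (forall x, Sol (Fcomb F xi) C x -> O x) ->
  exists d, 0 < d /\ forall eta, vdist xi eta < d -> forall x, Sol (Fcomb F eta) C x -> O x.
Proof.
  intros HC HCK Hb HO HxiO. apply NNPP; intro Hn.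
  destruct (choice (fun k (p : vec m * vec n) => vdist xi (fst p) < / INR (S k) /\
                      Sol (Fcomb F (fst p)) C (snd p) /\ ~ O (snd p))) as [u Hu].
  { intros k. apply NNPP; intro Hk. apply Hn. exists (/ INR (S k)).
    split; [apply inv_INR_S_pos|]. intros eta Heta x Hx. apply NNPP; intro Ox.
    apply Hk. exists (eta, x); auto. }
  destruct (bolzano_weierstrass n (fun k => snd (u k)) M) as [phi [z [Hphi Hz]]].
  { intros k. apply Hb, (proj2 (Hu k)). }
  assert (Hxi : vcv (fun k => fst (u (phi k))) xi)
    by (apply (vcv_subseq m (fun k => fst (u k))); auto;
        apply vcv_of_vdist_inv_INR_S; intros; apply Hu).
  assert (Oz : O z)
    by (apply HxiO, (Sol_Fcomb_closed_graph C _ xi _ z HC HCK Hxi Hz); intros; apply Hu).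
  destruct (vopen_eventually n O _ z HO Oz Hz) as [N HN]. exact (proj2 (proj2 (Hu (phi N))) (HN N (le_n _))).
Qed.

Lemma Fcomb_Sol_union_connected (N : vec m -> Prop) (C : vec n -> Prop) M :
  vconvex N -> (forall eta l, N eta -> 0 <= eta l) ->
  (forall x, C x -> K x) -> vclosed C -> vconvex C -> (exists x, C x) ->
  (forall x, C x -> vnorm x <= M) ->
  vconnected (fun x => exists eta, N eta /\ Sol (Fcomb F eta) C x).
Proof.
  intros HN HNnn HCK HCcl HCcv HCne HCb. apply vconnected_of_usc_links.
  intros a b [al [Nal Sa]] [be [Nbe Sb]].
  pose (zeta s := fun l => s * be l + (1 - s) * al l).
  assert (Nz : forall s, 0 <= s <= 1 -> N (zeta s)) by (intros; apply HN; auto).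
  exists (fun s => Sol (Fcomb F (zeta s)) C). split; [split|split; [|split]].
  - intros s Hs. split.
    + apply (Sol_exists n K C _ M); auto using Fcomb_continuous.
      apply Fcomb_monotone. intros; apply HNnn, Nz; auto.
    + apply vconvex_connected, (Sol_convex n K); auto using Fcomb_continuous.
      apply Fcomb_monotone. intros; apply HNnn, Nz; auto.
  - intros O HO t Ht HtO.
    destruct (Sol_Fcomb_usc C M (zeta t) O HCcl HCK HCb HO HtO) as [d [Hd Hd2]].
    destruct (vdist_convex_comb_small m al be d Hd) as [e [He He2]].
    exists e. split; [exact He|]. intros s Hs Hst. apply Hd2, He2, Hst.
  - intros s x Hs Hx. exists (zeta s). auto.
  - replace (zeta 0) with al by (apply functional_extensionality; intros; unfold zeta; ring).
    exact Sa.
  - replace (zeta 1) with be by (apply functional_extensionality; intros; unfold zeta; ring).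
    exact Sb.
Qed.

Lemma Fcomb_Sol_in_component (W A : vec n -> Prop) xi : (forall l, 0 <= xi l) ->
  (forall x, Sol (Fcomb F xi) K x -> W x) -> conn_component W A ->
  (exists x, Sol (Fcomb F xi) K x /\ A x) -> forall x, Sol (Fcomb F xi) K x -> A x.
Proof.
  intros Hxi HW HA Hmeet. apply (conn_component_absorbs n W A); auto.
  apply vconvex_connected, (Sol_convex n K); auto using Fcomb_continuous, Fcomb_monotone.
Qed.

Lemma Fcomb_Sol_near (PD : vec m -> Prop) (W A : vec n -> Prop) :
  vconvex PD -> (forall xi l, PD xi -> 0 <= xi l) ->
  (forall xi x, PD xi -> Sol (Fcomb F xi) K x -> W x) ->
  conn_component W A -> vbounded A ->
  forall xi0 x0, PD xi0 -> Sol (Fcomb F xi0) K x0 -> A x0 ->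
  exists d, 0 < d /\ forall eta, PD eta -> vdist xi0 eta < d ->
    exists x, Sol (Fcomb F eta) K x /\ A x.
Proof.
  intros HPD HPDnn HW HA [r Hr] xi0 x0 Hxi0 Hx0 Ax0.
  assert (Hmon : forall eta, PD eta -> monotone_on K (Fcomb F eta))
    by (intros; apply Fcomb_monotone; auto).
  assert (HS0 : forall x, Sol (Fcomb F xi0) K x -> A x)
    by (apply (Fcomb_Sol_in_component W A); eauto).
  pose proof (Hr x0 Ax0). pose proof (vnorm_nonneg n x0).
  set (C := trunc K (r + 1)).
  assert (HCK : forall x, C x -> K x) by (intros x []; auto).
  assert (HCb : forall x, C x -> vnorm x <= r + 1) by (intros x []; auto).
  assert (HCcl : vclosed C) by (apply trunc_closed; auto).
  assert (Cx0 : C x0) by (split; [apply Hx0|lra]).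
  destruct (Sol_Fcomb_usc C (r + 1) xi0 (fun x => vnorm x < r + 1) HCcl HCK HCb
              (vopen_norm_lt n (r + 1))) as [d [Hd Hnear]].
  { apply (Sol_trunc_lt n K _ r x0); auto using Fcomb_continuous. }
  set (N := fun eta => PD eta /\ vdist xi0 eta < d).
  assert (HNK : forall eta x, N eta -> Sol (Fcomb F eta) C x -> Sol (Fcomb F eta) K x)
    by (intros eta x [_ Hde] Hx; apply (Sol_trunc_interior n K _ (r + 1)); eauto).
  assert (HDA : forall x, (exists eta, N eta /\ Sol (Fcomb F eta) C x) -> A x).
  { apply (conn_component_absorbs n W A _ HA).
    - apply (Fcomb_Sol_union_connected N C (r + 1)); auto.
      + intros e1 e2 t [P1 D1] [P2 D2] Ht. split; [apply HPD|apply vconvex_ball]; auto.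
      + intros eta l [Heta _]. auto.
      + apply trunc_convex; auto.
      + exists x0; exact Cx0.
    - intros x [eta [HNe Hx]]. apply (HW eta); [apply HNe|apply HNK; auto].
    - exists x0. split; auto. exists xi0. split; [split; [auto|rewrite vdist_eq0; auto]|].
      apply (Sol_subset n _ K); auto. }
  exists d. split; [exact Hd|]. intros eta Heta Hde.
  destruct (Sol_exists n K C (Fcomb F eta) (r + 1) HCK (Hmon eta Heta) (Fcomb_continuous eta)
              HCcl (trunc_convex n K (r + 1) hKcv) (ex_intro _ x0 Cx0) HCb) as [x Hx].
  exists x. split; [apply (HNK eta x); [split|]; auto|].
  apply HDA. exists eta. split; [split|]; auto.
Qed.

End ParametricVI.

Lemma simplex_convex m : vconvex (@simplex m).
Proof.
  intros x y t [Hx Sx] [Hy Sy] Ht. split.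
  - intros l. specialize (Hx l); specialize (Hy l). nra.
  - rewrite fsum_plus, !fsum_scal, Sx, Sy. ring.
Qed.

Lemma ri_simplex_convex m : vconvex (@ri_simplex m).
Proof.
  intros x y t [Hx Sx] [Hy Sy] Ht. split.
  - intros l. specialize (Hx l); specialize (Hy l). destruct (Req_dec t 0); [subst; lra|nra].
  - rewrite fsum_plus, !fsum_scal, Sx, Sy. ring.
Qed.

Lemma Sol_Fcomb_SolW m n (K : vec n -> Prop) (F : Fin.t m -> vec n -> vec n) xi x :
  simplex xi -> Sol (Fcomb F xi) K x -> SolW F K x.
Proof.
  intros [Hxi Sxi] [Kx Hx]. split; [exact Kx|]. intros y Ky Hall.
  specialize (Hx y Ky). unfold Fcomb in Hx. rewrite (dot_fsum_l m n (fun l => F l x)) in Hx.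
  assert (Hj : exists j, 0 < xi j).
  { apply NNPP; intro Hn. enough (fsum m xi <= 0) by lra. rewrite <- (fsum_zero m).
    apply fsum_le. intros l. apply Rnot_lt_le. intro. apply Hn. exists l; auto. }
  destruct Hj as [j Hj].
  assert (0 < fsum m (fun l => xi l * dot (F l x) (vsub x y))).
  { eapply Rlt_le_trans; [|apply (fsum_ge_term m _ j)].
    - apply Rmult_lt_0_compat; auto.
    - intros l. apply Rmult_le_pos; auto. left; apply Hall. }
  rewrite (fsum_ext m _ (fun l => - (xi l * dot (F l x) (vsub x y)))), fsum_opp in Hx; [lra|].
  intros l. rewrite (dot_vsub_swap n (F l x) y x). ring.
Qed.

Theorem proposition3 (n m : nat) (K : vec n -> Prop) (F : Fin.t m -> vec n -> vec n)
  (hKne : exists x, K x) (hKcl : vclosed K) (hKcv : vconvex K)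
  (hFc : forall l, vcontinuous_on K (F l))
  (hFmon : forall l, monotone_on K (F l)) :
  (forall A : vec n -> Prop, conn_component (SolW F K) A -> vbounded A ->
     rel_open simplex (fun xi => simplex xi /\ exists x, Sol (Fcomb F xi) K x /\ A x))
  /\
  (forall A : vec n -> Prop, conn_component (SolPr F K) A -> vbounded A ->
     rel_open ri_simplex (fun xi => ri_simplex xi /\ exists x, Sol (Fcomb F xi) K x /\ A x)).
Proof.
  split; intros A HA HAb; (split; [intros xi []; auto|]); intros xi [Hxi [x0 [Hx0 Ax0]]].
  - destruct (Fcomb_Sol_near m n K F hKcl hKcv hFc hFmon simplex (SolW F K) A
                (simplex_convex m) (fun xi l H => proj1 H l) (Sol_Fcomb_SolW m n K F)
                HA HAb xi x0 Hxi Hx0 Ax0) as [d [Hd Hnear]].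
    exists d. split; [exact Hd|]. intros eta Heta Hde. split; auto.
  - destruct (Fcomb_Sol_near m n K F hKcl hKcv hFc hFmon ri_simplex (SolPr F K) A
                (ri_simplex_convex m) (fun xi l H => Rlt_le _ _ (proj1 H l))
                (fun xi x H1 H2 => ex_intro _ xi (conj H1 H2))
                HA HAb xi x0 Hxi Hx0 Ax0) as [d [Hd Hnear]].
    exists d. split; [exact Hd|]. intros eta Heta Hde. split; auto.
Qed.
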